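(* Let $(A,\Delta)$ be a regular multiplier Hopf algebra acting on an algebra $R$ (so $R$ is a left $A$-module algebra). Let $C$ be an algebra over $\mathbb C$ with non-degenerate product and let $\pi_A:A\to M(C)$ and $\pi_R:R\to M(C)$ be algebra homomorphisms such that $$\pi_A(a)\pi_R(x)=\sum \pi_R(a_{(1)}x)\pi_A(a_{(2)})$$ for all $a\in A$, $x\in R$. Then the linear map $\pi:R\# A\to M(C)$ given by $\pi(x\# a)=\pi_R(x)\pi_A(a)$ is an algebra homomorphism.
   Context: Algebras are over $\mathbb C$, possibly without identity, with non-degenerate product; $M(\cdot)$ is the multiplier algebra. A regular multiplier Hopf algebra is a pair $(A,\Delta)$ with $\Delta:A\to M(A\otimes A)$ a coassociative homomorphism such that $\Delta(a)(1\otimes b),(a\otimes 1)\Delta(b),\Delta(a)(b\otimes 1),(1\otimes a)\Delta(b)\in A\otimes A$, the maps $a\otimes b\mapsto\Delta(a)(1\otimes b)$, $a\otimes b\mapsto(a\otimes 1)\Delta(b)$ are bijective, and likewise for the flipped comultiplication; Sweedler notation is used with legs covered. A left $A$-module algebra is an algebra $R$ with non-degenerate product which is a unital left $A$-module ($AR=R$) with $a(xx')=\sum(a_{(1)}x)(a_{(2)}x')$. For $a\in A$, $x\in R$, the element $\sum a_{(1)}x\otimes a_{(2)}\in R\otimes A$ is well defined ($x$ covers $a_{(1)}$), and $\sum\pi_R(a_{(1)}x)\pi_A(a_{(2)})$ is the image of it under $y\otimes b\mapsto\pi_R(y)\pi_A(b)$. The smash product $R\# A$ is $R\otimes A$ with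 product $(x\# a)(x'\# a')=\sum x(a_{(1)}x')\# a_{(2)}a'$. *)

From HB Require Import structures.
From mathcomp Require Import all_boot all_algebra.
From mathcomp Require Import complex Rstruct.
From Stdlib Require Import ClassicalEpsilon.
Set Implicit Arguments. Unset Strict Implicit. Unset Printing Implicit Defensive.
Import GRing.Theory.
Local Open Scope ring_scope.

Definition CC : fieldType := complex Rdefinitions.R.

Record nalg (K : fieldType) := NAlg {
  nalg_sort :> lmodType K;
  nmul : nalg_sort -> nalg_sort -> nalg_sort;
  nmulDl : forall k a b c, nmul (k *: a + b) c = k *: nmul a c + nmul b c;
  nmulDr : forall k a b c, nmul a (k *: b + c) = k *: nmul a b + nmul a c;
  nmulA : forall a b c, nmul a (nmul b c) = nmul (nmul a b) c;
  nmul_ndl : forall a, (forall b, nmul a b = 0) -> a = 0;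
  nmul_ndr : forall a, (forall b, nmul b a = 0) -> a = 0 }.
Arguments nmul {K n}.

Definition mult (K : fieldType) (C : nalg K) := ((C -> C) * (C -> C))%type.
Section Mult.
Variables (K : fieldType) (C : nalg K).
(* m = (l, r):  m c = l c,  c m = r c *)
Definition is_multiplier (m : mult C) :=
  forall a b : C, m.1 (nmul a b) = nmul (m.1 a) b /\
                  m.2 (nmul a b) = nmul a (m.2 b) /\
                  nmul a (m.1 b) = nmul (m.2 a) b.
Definition meq (m n : mult C) := (forall c, m.1 c = n.1 c) /\ (forall c, m.2 c = n.2 c).
Definition mmul (m n : mult C) : mult C := (fun c => m.1 (n.1 c), fun c => n.2 (m.2 c)).
Definition madd (m n : mult C) : mult C := (fun c => m.1 c + n.1 c, fun c => m.2 c + n.2 c).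
Definition mscale (k : K) (m : mult C) : mult C := (fun c => k *: m.1 c, fun c => k *: m.2 c).
Definition mzero : mult C := (fun _ => 0, fun _ => 0).
Definition msum (s : seq (mult C)) : mult C := foldr madd mzero s.
End Mult.

Definition is_alg_hom (K : fieldType) (A C : nalg K) (phi : A -> mult C) :=
  [/\ forall a, is_multiplier (phi a),
      forall k a b, meq (phi (k *: a + b)) (madd (mscale k (phi a)) (phi b)) &
      forall a b, meq (phi (nmul a b)) (mmul (phi a) (phi b))].

Definition tensor (U V : Type) := seq (U * V).
Definition tensor3 (U V W : Type) := seq (U * V * W).
Section Tensor.
Variable K : fieldType.
Definition lfun_ok (V : lmodType K) (f : V -> K) :=
  forall k u v, f (k *: u + v) = k * f u + f v.
(* two finite sums of pure tensors define the same element of U (x) V *)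
Definition teq (U V : lmodType K) (t u : tensor U V) :=
  forall (f : U -> K) (g : V -> K), lfun_ok f -> lfun_ok g ->
    \sum_(p <- t) f p.1 * g p.2 = \sum_(p <- u) f p.1 * g p.2.
Definition teq3 (U V W : lmodType K) (t u : tensor3 U V W) :=
  forall (f : U -> K) (g : V -> K) (h : W -> K), lfun_ok f -> lfun_ok g -> lfun_ok h ->
    \sum_(p <- t) f p.1.1 * g p.1.2 * h p.2 = \sum_(p <- u) f p.1.1 * g p.1.2 * h p.2.
Definition tscale (U V : lmodType K) (k : K) (t : tensor U V) : tensor U V :=
  [seq (k *: p.1, p.2) | p <- t].
Definition tflip (U V : Type) (t : tensor U V) : tensor V U := [seq (p.2, p.1) | p <- t].
Definition tmul (A B : nalg K) (t u : tensor A B) : tensor A B :=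
  [seq (nmul p.1 q.1, nmul p.2 q.2) | p <- t, q <- u].
(* linear extension to A (x) A of a map defined on pure tensors *)
Definition text (A : nalg K) (T : A -> A -> tensor A A) (t : tensor A A) : tensor A A :=
  flatten [seq T p.1 p.2 | p <- t].
Definition tbij (A : nalg K) (F : tensor A A -> tensor A A) :=
  (forall t u, teq (F t) (F u) -> teq t u) /\ (forall s, exists t, teq (F t) s).
End Tensor.

(* Delta(a) is a multiplier of A (x) A, given by its left action dL a
   (t |-> Delta(a) t) and right action dR a (t |-> t Delta(a)).
   T1 a b = Delta(a)(1 (x) b),  T2 a b = (a (x) 1)Delta(b),
   T3 a b = Delta(a)(b (x) 1),  T4 a b = (1 (x) a)Delta(b). *)
Record rmha (K : fieldType) := RMHA {
  hA :> nalg K;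
  dL : hA -> tensor hA hA -> tensor hA hA;
  dR : hA -> tensor hA hA -> tensor hA hA;
  T1 : hA -> hA -> tensor hA hA;
  T2 : hA -> hA -> tensor hA hA;
  T3 : hA -> hA -> tensor hA hA;
  T4 : hA -> hA -> tensor hA hA;
  (* Delta(a) is a well-defined multiplier of A (x) A *)
  dL_teq : forall a t u, teq t u -> teq (dL a t) (dL a u);
  dR_teq : forall a t u, teq t u -> teq (dR a t) (dR a u);
  dL_mul : forall a t u, teq (dL a (tmul t u)) (tmul (dL a t) u);
  dR_mul : forall a t u, teq (dR a (tmul t u)) (tmul t (dR a u));
  dLR : forall a t u, teq (tmul t (dL a u)) (tmul (dR a t) u);
  dL_lin : forall k a b t, teq (dL (k *: a + b) t) (tscale k (dL a t) ++ dL b t);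
  dR_lin : forall k a b t, teq (dR (k *: a + b) t) (tscale k (dR a t) ++ dR b t);
  dL_hom : forall a b t, teq (dL (nmul a b) t) (dL a (dL b t));
  dR_hom : forall a b t, teq (dR (nmul a b) t) (dR b (dR a t));
  (* the four products lie in A (x) A and are given by T1..T4 *)
  T1_def : forall a b c d,
    teq (dL a [:: (c, nmul b d)]) (tmul (T1 a b) [:: (c, d)]) /\
    teq [seq (p.1, nmul p.2 b) | p <- dR a [:: (c, d)]] (tmul [:: (c, d)] (T1 a b));
  T2_def : forall a b c d,
    teq [seq (nmul a p.1, p.2) | p <- dL b [:: (c, d)]] (tmul (T2 a b) [:: (c, d)]) /\
    teq (dR b [:: (nmul c a, d)]) (tmul [:: (c, d)] (T2 a b));
  T3_def : forall a b c d,
    teq (dL a [:: (nmul b c, d)]) (tmul (T3 a b) [:: (c, d)]) /\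
    teq [seq (nmul p.1 b, p.2) | p <- dR a [:: (c, d)]] (tmul [:: (c, d)] (T3 a b));
  T4_def : forall a b c d,
    teq [seq (p.1, nmul a p.2) | p <- dL b [:: (c, d)]] (tmul (T4 a b) [:: (c, d)]) /\
    teq (dR b [:: (c, nmul d a)]) (tmul [:: (c, d)] (T4 a b));
  (* coassociativity:
     (a(x)1(x)1)(Delta(x)id)(Delta(b)(1(x)c)) = (id(x)Delta)((a(x)1)Delta(b))(1(x)1(x)c) *)
  coassoc : forall a b c,
    teq3 (flatten [seq [seq (r.1, r.2, p.2) | r <- T2 a p.1] | p <- T1 b c])
         (flatten [seq [seq (q.1, s.1, s.2) | s <- T1 q.2 c] | q <- T2 a b]);
  (* bijectivity of a(x)b |-> Delta(a)(1(x)b) and a(x)b |-> (a(x)1)Delta(b) *)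
  T1_bij : tbij (text T1);
  T2_bij : tbij (text T2);
  (* same for the flipped comultiplication:
     Delta^cop(a)(1(x)b) = flip(T3 a b),  (a(x)1)Delta^cop(b) = flip(T4 a b) *)
  T3_bij : tbij (text (fun a b => tflip (T3 a b)));
  T4_bij : tbij (text (fun a b => tflip (T4 a b)))
}.

Record modalg (K : fieldType) (A : rmha K) := ModAlg {
  ma :> nalg K;
  act : A -> ma -> ma;
  act_linl : forall k (a b : A) x, act (k *: a + b) x = k *: act a x + act b x;
  act_linr : forall k a (x y : ma), act a (k *: x + y) = k *: act a x + act a y;
  act_mul : forall (a b : A) x, act (nmul a b) x = act a (act b x);
  (* unital: AR = R *)
  act_unital : forall x : ma, exists s : seq (A * ma), x = \sum_(p <- s) act p.1 p.2;
  (* a(xx') = sum (a_(1)x)(a_(2)x'), x' = sum c_j y_j covering a_(2) *)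
  act_malg : forall (a : A) (x x' : ma) (s : seq (A * ma)),
    x' = \sum_(p <- s) act p.1 p.2 ->
    act a (nmul x x') =
      \sum_(p <- s) \sum_(q <- T1 a p.1) nmul (act q.1 x) (act q.2 p.2)
}.

Section Smash.
Variables (K : fieldType) (A : rmha K) (R : modalg A).
Definition dec (x : R) : seq (A * R) :=
  proj1_sig (constructive_indefinite_description _ (act_unital x)).
(* sum a_(1)x (x) a_(2) in R (x) A, computed from x = sum b_i x_i
   and Delta(a)(b_i (x) 1) = T3 a b_i *)
Definition sweedler (a : A) (x : R) : tensor R A :=
  flatten [seq [seq (act q.1 p.2, q.2) | q <- T3 a p.1] | p <- dec x].
(* smash product R # A = R (x) A, (x#a)(x'#a') = sum x(a_(1)x') # a_(2)a' *)
Definition smash_mul (X Y : tensor R A) : tensor R A :=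
  flatten [seq [seq (nmul p.1 r.1, nmul r.2 q.2) | r <- sweedler p.2 q.1]
          | p <- X, q <- Y].
Definition smash_pi (C : nalg K) (piR : R -> mult C) (piA : A -> mult C)
  (X : tensor R A) : mult C :=
  msum [seq mmul (piR p.1) (piA p.2) | p <- X].
End Smash.

(* Since C is non-degenerate, the two components of a multiplier are linear maps on C,
   so both sides of pi(XY) = pi(X) pi(Y) can be compared by evaluating them on c in C
   and expanding all sums.  For pure tensors, pi((x # a)(x' # a')) is
   sum piR(x) piR(a_(1)x') piA(a_(2)) piA(a'), and the commutation hypothesis turns
   the middle factor sum piR(a_(1)x') piA(a_(2)) into piA(a) piR(x'). *)
From HB Require Import structures.
From mathcomp Require Import all_boot all_algebra.
Set Implicit Arguments. Unset Strict Implicit. Unset Printing Implicit Defensive.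
Import GRing.Theory.
Local Open Scope ring_scope.

Section LinearFun.
Variables (K : fieldType) (U V : lmodType K) (f : U -> V).
Hypothesis f_linear : linear f.

Let fL : {linear U -> V} := HB.pack f (GRing.isLinear.Build _ _ _ _ f f_linear).

Lemma linear_fun0 : f 0 = 0. Proof. exact: (linear0 fL). Qed.
Lemma linear_funD u v : f (u + v) = f u + f v. Proof. exact: (linearD fL). Qed.
Lemma linear_funB u v : f (u - v) = f u - f v. Proof. exact: (linearB fL). Qed.
Lemma linear_funZ k u : f (k *: u) = k *: f u. Proof. exact: (linearZ_LR fL). Qed.
Lemma linear_fun_sum (I : Type) (s : seq I) (F : I -> U) :
  f (\sum_(i <- s) F i) = \sum_(i <- s) f (F i).
Proof. exact: (linear_sum fL). Qed.

End LinearFun.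

Section Multipliers.
Variables (K : fieldType) (C : nalg K).
Implicit Types (x y : C) (m n : mult C).

Lemma nmul_linear_l y : linear (fun x : C => nmul x y).
Proof. by move=> k x z; apply: nmulDl. Qed.

Lemma nmul_linear_r x : linear (@nmul K C x).
Proof. by move=> k; apply: nmulDr. Qed.

Lemma nmul_ndl_eq x y : (forall z, nmul x z = nmul y z) -> x = y.
Proof.
move=> xy; apply/subr0_eq/nmul_ndl => z.
by rewrite (linear_funB (nmul_linear_l z)) xy subrr.
Qed.

Lemma nmul_ndr_eq x y : (forall z, nmul z x = nmul z y) -> x = y.
Proof.
move=> xy; apply/subr0_eq/nmul_ndr => z.
by rewrite (linear_funB (nmul_linear_r z)) xy subrr.
Qed.

Lemma multiplier_linear_l m : is_multiplier m -> linear m.1.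
Proof.
move=> mM k x y; apply: nmul_ndr_eq => z.
by rewrite !(mM z _).2.2 !nmulDr !(mM z _).2.2.
Qed.

Lemma multiplier_linear_r m : is_multiplier m -> linear m.2.
Proof.
move=> mM k x y; apply: nmul_ndl_eq => z.
by rewrite -!(mM _ z).2.2 !nmulDl -!(mM _ z).2.2.
Qed.

Lemma mzero_multiplier : is_multiplier (@mzero K C).
Proof.
move=> x y /=.
by rewrite (linear_fun0 (nmul_linear_l y)) (linear_fun0 (nmul_linear_r x)).
Qed.

Lemma madd_multiplier m n :
  is_multiplier m -> is_multiplier n -> is_multiplier (madd m n).
Proof.
move=> mM nM x y /=.
rewrite (linear_funD (nmul_linear_l y)) (linear_funD (nmul_linear_l _)).
rewrite !(linear_funD (nmul_linear_r _)).
by rewrite (mM x y).1 (nM x y).1 (mM x y).2.1 (nM x y).2.1 (mM x y).2.2 (nM x y).2.2.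
Qed.

Lemma mmul_multiplier m n :
  is_multiplier m -> is_multiplier n -> is_multiplier (mmul m n).
Proof.
move=> mM nM x y /=.
by rewrite (nM x y).1 (mM _ y).1 (mM x y).2.1 (nM x _).2.1 (mM x _).2.2 (nM _ y).2.2.
Qed.

Lemma msum_map_multiplier (I : Type) (s : seq I) (F : I -> mult C) :
  (forall i, is_multiplier (F i)) -> is_multiplier (msum [seq F i | i <- s]).
Proof.
move=> FM; elim: s => [|i s IHs] /=; first exact: mzero_multiplier.
exact: madd_multiplier.
Qed.

Lemma msum_map_l (I : Type) (s : seq I) (F : I -> mult C) x :
  (msum [seq F i | i <- s]).1 x = \sum_(i <- s) (F i).1 x.
Proof. by elim: s => [|i s IHs]; rewrite ?big_nil ?big_cons //= IHs. Qed.

Lemma msum_map_r (I : Type) (s : seq I) (F : I -> mult C) x :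
  (msum [seq F i | i <- s]).2 x = \sum_(i <- s) (F i).2 x.
Proof. by elim: s => [|i s IHs]; rewrite ?big_nil ?big_cons //= IHs. Qed.

Lemma alg_hom_linear_l (A : nalg K) (phi : A -> mult C) x :
  is_alg_hom phi -> linear (fun a => (phi a).1 x).
Proof. by case=> _ phiD _ k a b; rewrite ((phiD k a b).1 x). Qed.

Lemma alg_hom_linear_r (A : nalg K) (phi : A -> mult C) x :
  is_alg_hom phi -> linear (fun a => (phi a).2 x).
Proof. by case=> _ phiD _ k a b; rewrite ((phiD k a b).2 x). Qed.

End Multipliers.

Section SmashRepresentation.
Variables (K : fieldType) (A : rmha K) (R : modalg A) (C : nalg K).
Variables (piA : A -> mult C) (piR : R -> mult C).
Hypotheses (piA_hom : is_alg_hom piA) (piR_hom : is_alg_hom piR).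
Hypothesis piA_piR : forall (a : A) (x : R),
  meq (mmul (piA a) (piR x)) (msum [seq mmul (piR p.1) (piA p.2) | p <- sweedler a x]).

Local Notation pi := (smash_pi piR piA).

Let piA_linear_l a : linear (piA a).1.
Proof. by case: piA_hom => /(_ a) /multiplier_linear_l. Qed.
Let piA_linear_r a : linear (piA a).2.
Proof. by case: piA_hom => /(_ a) /multiplier_linear_r. Qed.
Let piR_linear_l x : linear (piR x).1.
Proof. by case: piR_hom => /(_ x) /multiplier_linear_l. Qed.
Let piR_linear_r x : linear (piR x).2.
Proof. by case: piR_hom => /(_ x) /multiplier_linear_r. Qed.

Let piA_piR_l a x c :
  (piA a).1 ((piR x).1 c) = \sum_(p <- sweedler a x) (piR p.1).1 ((piA p.2).1 c).
Proof. by have /= -> := (piA_piR a x).1 c; rewrite msum_map_l. Qed.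
Let piA_piR_r a x c :
  (piR x).2 ((piA a).2 c) = \sum_(p <- sweedler a x) (piA p.2).2 ((piR p.1).2 c).
Proof. by have /= -> := (piA_piR a x).2 c; rewrite msum_map_r. Qed.

Lemma smash_pi_l X c : (pi X).1 c = \sum_(p <- X) (piR p.1).1 ((piA p.2).1 c).
Proof. exact: msum_map_l. Qed.

Lemma smash_pi_r X c : (pi X).2 c = \sum_(p <- X) (piA p.2).2 ((piR p.1).2 c).
Proof. exact: msum_map_r. Qed.

Lemma big_tscale (V : nmodType) k (X : tensor R A) (F : R * A -> V) :
  \sum_(p <- tscale k X) F p = \sum_(p <- X) F (k *: p.1, p.2).
Proof. exact: big_map. Qed.

Lemma big_smash_mul (V : nmodType) (F : R * A -> V) (X Y : tensor R A) :
  \sum_(t <- smash_mul X Y) F t =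
  \sum_(p <- X) \sum_(q <- Y) \sum_(r <- sweedler p.2 q.1) F (nmul p.1 r.1, nmul r.2 q.2).
Proof.
rewrite big_flatten big_allpairs_dep.
by apply: eq_bigr => p _; apply: eq_bigr => q _; rewrite big_map.
Qed.

Lemma smash_pi_multiplier X : is_multiplier (pi X).
Proof.
apply: msum_map_multiplier => p.
by apply: mmul_multiplier; [case: piR_hom|case: piA_hom].
Qed.

Lemma smash_pi_linear k X Y :
  meq (pi (tscale k X ++ Y)) (madd (mscale k (pi X)) (pi Y)).
Proof.
split=> c /=; rewrite !(smash_pi_l, smash_pi_r) big_cat big_tscale scaler_sumr /=.
  by congr (_ + _); apply: eq_bigr => p _; rewrite (linear_funZ (alg_hom_linear_l _ piR_hom)).
congr (_ + _); apply: eq_bigr => p _ /=.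
by rewrite (linear_funZ (alg_hom_linear_r _ piR_hom)) (linear_funZ (piA_linear_r _)).
Qed.

Lemma smash_pi_mul_l X Y c : (pi (smash_mul X Y)).1 c = (pi X).1 ((pi Y).1 c).
Proof.
have [_ _ piA_mul] := piA_hom; have [_ _ piR_mul] := piR_hom.
rewrite !smash_pi_l big_smash_mul; apply: eq_bigr => p _ /=.
rewrite (linear_fun_sum (piA_linear_l _)) (linear_fun_sum (piR_linear_l _)).
apply: eq_bigr => q _ /=.
rewrite piA_piR_l (linear_fun_sum (piR_linear_l _)).
by apply: eq_bigr => r _; rewrite ((piR_mul _ _).1 _) ((piA_mul _ _).1 _).
Qed.

Lemma smash_pi_mul_r X Y c : (pi (smash_mul X Y)).2 c = (pi Y).2 ((pi X).2 c).
Proof.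
have [_ _ piA_mul] := piA_hom; have [_ _ piR_mul] := piR_hom.
rewrite !smash_pi_r big_smash_mul.
under [RHS]eq_bigr => q _ do
  rewrite (linear_fun_sum (piR_linear_r _)) (linear_fun_sum (piA_linear_r _)).
rewrite exchange_big; apply: eq_bigr => p _; apply: eq_bigr => q _ /=.
rewrite piA_piR_r (linear_fun_sum (piA_linear_r _)).
by apply: eq_bigr => r _; rewrite ((piR_mul _ _).2 _) ((piA_mul _ _).2 _).
Qed.

Lemma smash_pi_mul X Y : meq (pi (smash_mul X Y)) (mmul (pi X) (pi Y)).
Proof. by split=> c; [apply: smash_pi_mul_l | apply: smash_pi_mul_r]. Qed.

End SmashRepresentation.

Theorem proposition5p10 (A : rmha CC) (R : modalg A) (C : nalg CC)
  (piA : A -> mult C) (piR : R -> mult C) :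
  is_alg_hom piA -> is_alg_hom piR ->
  (forall (a : A) (x : R),
     meq (mmul (piA a) (piR x))
         (msum [seq mmul (piR p.1) (piA p.2) | p <- sweedler a x])) ->
  [/\ forall X, is_multiplier (smash_pi piR piA X),
      forall k X Y, meq (smash_pi piR piA (tscale k X ++ Y))
                        (madd (mscale k (smash_pi piR piA X)) (smash_pi piR piA Y)) &
      forall X Y, meq (smash_pi piR piA (smash_mul X Y))
                      (mmul (smash_pi piR piA X) (smash_pi piR piA Y))].
Proof.
move=> piA_hom piR_hom piA_piR; split.
- exact: smash_pi_multiplier.
- exact: smash_pi_linear.
- exact: smash_pi_mul.
Qed.
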